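(* Let $n\ge 2$ be an integer, $a>0$, and let $a_0,\dots,a_{n-1}:((-a,a)\setminus\{0\})\times\mathbb{K}\to\mathbb{K}$ be arbitrary functions, where $\mathbb{K}=\mathbb{R}$ or $\mathbb{C}$. Let $f\in C^\infty(-a,a)$ be a solution of $$f^{(n)}(x)+a_{n-1}(x,f(x))f^{(n-1)}(x)+\cdots+a_0(x,f(x))f(x)=0,\qquad x\in(-a,a)\setminus\{0\},$$ such that $$|a_k(x,f(x))|=O\!\left(\frac{1}{|x|^{n-k}}\right)\quad\text{as }x\to 0,\qquad k=0,1,\dots,n-1.$$ Define $$C_n=\max_{0\le k\le n-1}\ \limsup_{x\to 0}\,|x|^{n-k}|a_k(x,f(x))|,\qquad B_n=\sum_{k=0}^{n-1}\frac1{k!}.$$ If $f^{(k)}(0)=0$ for every integer $k$ with $0\le k\le B_nC_n+n-1$, then there exists $\delta>0$ such that $f\equiv 0$ on $[-\delta,\delta]$.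
   Context: The coefficients may be singular at $x=0$; the equation is only required to hold for $x\neq 0$. By the $O$-hypothesis, $C_n$ is a finite nonnegative number. *)

From Stdlib Require Import Reals Lra List Arith Factorial.
Open Scope R_scope.

(* D k is the k-th derivative of D 0 on the open interval (-a,a):
   D 0 is C^infinity on (-a,a) with derivatives D 1, D 2, ... *)
Definition derivs_on (a : R) (D : nat -> R -> R) : Prop :=
  forall (k : nat) (x : R), -a < x < a -> derivable_pt_lim (D k) x (D (S k) x).

Definition is_limsup0 (g : R -> R) (L : R) : Prop :=
  (forall e, 0 < e -> exists d, 0 < d /\
      forall x, x <> 0 -> Rabs x < d -> g x <= L + e) /\
  (forall e d, 0 < e -> 0 < d -> exists x, x <> 0 /\ Rabs x < d /\ L - e <= g x).

Definition Rsum_lt (g : nat -> R) (n : nat) : R :=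
  fold_right Rplus 0 (map g (seq 0 n)).

Definition Bn (n : nat) : R := Rsum_lt (fun k => / INR (Factorial.fact k)) n.

(* max_{0<=k<=n-1} L k  (the L k are limsups of nonnegative functions,
   so taking the max together with 0 changes nothing) *)
Definition maxlist (L : nat -> R) (n : nat) : R :=
  fold_right Rmax 0 (map L (seq 0 n)).

Definition CC : Type := (R * R)%type.
Definition C0 : CC := (0, 0).
Definition Cadd (z w : CC) : CC := (fst z + fst w, snd z + snd w).
Definition Cmul (z w : CC) : CC :=
  (fst z * fst w - snd z * snd w, fst z * snd w + snd z * fst w).
Definition Cnorm (z : CC) : R := sqrt (fst z * fst z + snd z * snd z).
Definition Csum_lt (g : nat -> CC) (n : nat) : CC :=
  fold_right Cadd C0 (map g (seq 0 n)).

(* Write n + p for the order of vanishing at 0, so that p + 1 > B_n C_n, and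
   fix K slightly above C_n with K B_n < p + 1.  Near 0 the equation gives
   |f^(n)(s)| <= sum_k K |s|^(k-n) |f^(k)(s)|.  On one side of 0, integrating
   the bounded (n+p)-th derivative p times gives |f^(n)(s)| <= S s^p; integrating
   n-k more times gives |f^(k)(s)| <= S s^(p+n-k) / ((p+1)...(p+n-k)), and the
   equation then returns |f^(n)(s)| <= q S s^p with q <= K B_n / (p+1) < 1.
   Iterating forces S = 0, hence f = 0. *)

From Stdlib Require Import Reals Lra List Factorial ZArith Lia.
Open Scope R_scope.

Lemma Rsum_S (g : nat -> R) (n : nat) : Rsum_lt g (S n) = Rsum_lt g n + g n.
Proof.
  unfold Rsum_lt. rewrite seq_S, map_app, fold_right_app. simpl.
  induction (map g (seq 0 n)) as [|y l IH]; simpl; [|rewrite IH]; ring.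
Qed.

Lemma Rsum_Sl (g : nat -> R) (n : nat) :
  Rsum_lt g (S n) = g 0%nat + Rsum_lt (fun k => g (S k)) n.
Proof. unfold Rsum_lt. simpl. rewrite <- seq_shift, map_map. reflexivity. Qed.

Lemma Rsum_le (f g : nat -> R) (n : nat) :
  (forall k, (k < n)%nat -> f k <= g k) -> Rsum_lt f n <= Rsum_lt g n.
Proof.
  induction n as [|n IH]; intros Hfg; [unfold Rsum_lt; simpl; lra|].
  rewrite !Rsum_S. assert (f n <= g n) by (apply Hfg; lia).
  assert (Rsum_lt f n <= Rsum_lt g n) by (apply IH; intros; apply Hfg; lia). lra.
Qed.

Lemma Rsum_ext (f g : nat -> R) (n : nat) :
  (forall k, (k < n)%nat -> f k = g k) -> Rsum_lt f n = Rsum_lt g n.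
Proof.
  intros Hfg. apply Rle_antisym; apply Rsum_le; intros k Hk; rewrite Hfg by exact Hk; lra.
Qed.

Lemma Rsum_scal (f : nat -> R) (c : R) (n : nat) :
  Rsum_lt (fun k => c * f k) n = c * Rsum_lt f n.
Proof. induction n as [|n IH]; [unfold Rsum_lt; simpl; ring|]. rewrite !Rsum_S, IH. ring. Qed.

Lemma Rsum_zero (n : nat) : Rsum_lt (fun _ => 0) n = 0.
Proof. induction n as [|n IH]; [reflexivity|]. rewrite Rsum_S, IH. ring. Qed.

Lemma Bn_S (n : nat) : Bn (S n) = Bn n + / INR (fact n).
Proof. apply Rsum_S. Qed.

Lemma Bn_ge1 (n : nat) : (1 <= n)%nat -> 1 <= Bn n.
Proof.
  induction 1 as [|m _ IH]; [unfold Bn, Rsum_lt; simpl; lra|].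
  rewrite Bn_S. pose proof (Rinv_0_lt_compat _ (lt_0_INR _ (lt_O_fact m))). lra.
Qed.

Lemma maxlist_ge (L : nat -> R) (n k : nat) : (k < n)%nat -> L k <= maxlist L n.
Proof.
  unfold maxlist. intros Hk. assert (Hin : In k (seq 0 n)) by (apply in_seq; lia).
  induction (seq 0 n) as [|j l IH]; simpl in *; [tauto|].
  destruct Hin as [->|Hin]; [apply Rmax_l|].
  eapply Rle_trans; [apply IH, Hin|apply Rmax_r].
Qed.

Lemma maxlist_nonneg (L : nat -> R) (n : nat) : 0 <= maxlist L n.
Proof.
  unfold maxlist. induction (seq 0 n) as [|j l IH]; simpl; [lra|].
  eapply Rle_trans; [apply IH|apply Rmax_r].
Qed.

Lemma Cnorm_nonneg (z : CC) : 0 <= Cnorm z.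
Proof. apply sqrt_pos. Qed.

Lemma Cnorm_sq (a b : R) : Cnorm (a, b) * Cnorm (a, b) = a * a + b * b.
Proof. apply sqrt_sqrt. nra. Qed.

Lemma Cnorm_eq0 (a b : R) : Cnorm (a, b) = 0 -> a = 0 /\ b = 0.
Proof. intros H. pose proof (Cnorm_sq a b) as E. rewrite H in E. split; nra. Qed.

Lemma Cnorm_real (a : R) : Cnorm (a, 0) = Rabs a.
Proof. unfold Cnorm; simpl. rewrite <- sqrt_Rsqr_abs. f_equal. unfold Rsqr. ring. Qed.

Lemma Cnorm_mul (z w : CC) : Cnorm (Cmul z w) = Cnorm z * Cnorm w.
Proof.
  destruct z as [a b], w as [c d]. unfold Cnorm, Cmul; simpl.
  rewrite <- sqrt_mult by nra. f_equal. ring.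
Qed.

(* Cauchy-Schwarz in the plane, from Lagrange's identity
   (a^2+b^2)(c^2+d^2) = (ac+bd)^2 + (ad-bc)^2. *)
Lemma Cauchy_Schwarz (a b c d : R) : a * c + b * d <= Cnorm (a, b) * Cnorm (c, d).
Proof.
  unfold Cnorm; simpl. rewrite <- sqrt_mult by nra.
  eapply Rle_trans; [apply Rle_abs|]. rewrite <- sqrt_Rsqr_abs.
  apply sqrt_le_1_alt. unfold Rsqr.
  assert (0 <= (a * d - b * c) * (a * d - b * c)) by apply Rle_0_sqr. nra.
Qed.

Lemma Cnorm_add (z w : CC) : Cnorm (Cadd z w) <= Cnorm z + Cnorm w.
Proof.
  destruct z as [a b], w as [c d]. unfold Cadd; simpl.
  pose proof (Cauchy_Schwarz a b c d). pose proof (Cnorm_sq a b). pose proof (Cnorm_sq c d).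
  pose proof (Cnorm_nonneg (a, b)). pose proof (Cnorm_nonneg (c, d)).
  set (X := Cnorm (a, b)) in *. set (Y := Cnorm (c, d)) in *.
  unfold Cnorm; simpl. rewrite <- (sqrt_Rsqr (X + Y)) by lra.
  apply sqrt_le_1_alt. unfold Rsqr. nra.
Qed.

Lemma Cnorm_le_abs (a b : R) : Cnorm (a, b) <= Rabs a + Rabs b.
Proof.
  replace (Rabs b) with (Cnorm (0, b)).
  - rewrite <- Cnorm_real. replace (a, b) with (Cadd (a, 0) (0, b)) at 1.
    + apply Cnorm_add.
    + unfold Cadd; simpl. f_equal; ring.
  - rewrite <- Cnorm_real. unfold Cnorm; simpl. f_equal. ring.
Qed.

Lemma Csum_norm (g : nat -> CC) (n : nat) :
  Cnorm (Csum_lt g n) <= Rsum_lt (fun k => Cnorm (g k)) n.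
Proof.
  unfold Csum_lt, Rsum_lt. induction (seq 0 n) as [|j l IH]; simpl.
  - unfold Cnorm, C0; simpl. replace (0 * 0 + 0 * 0) with 0 by ring. rewrite sqrt_0. lra.
  - eapply Rle_trans; [apply Cnorm_add|]. lra.
Qed.

Lemma Cnorm_attained (a b : R) :
  exists al be, al * al + be * be = 1 /\ al * a + be * b = Cnorm (a, b).
Proof.
  set (N := Cnorm (a, b)). pose proof (Cnorm_sq a b) as HN. fold N in HN.
  destruct (Req_dec N 0) as [N0|N0].
  - destruct (Cnorm_eq0 a b N0) as [-> ->]. exists 1, 0. split; [ring|]. rewrite N0. ring.
  - exists (a / N), (b / N). split.
    + replace (a / N * (a / N) + b / N * (b / N)) with ((a * a + b * b) / (N * N)) by (field; lra).
      rewrite <- HN. field. lra.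
    + replace (a / N * a + b / N * b) with ((a * a + b * b) / N) by (field; lra).
      rewrite <- HN. field. lra.
Qed.

Lemma Cnorm_solve (w : CC) (g : nat -> CC) (n : nat) :
  Cadd w (Csum_lt g n) = C0 -> Cnorm w <= Rsum_lt (fun k => Cnorm (g k)) n.
Proof.
  intros E. eapply Rle_trans; [|apply Csum_norm].
  destruct w as [w1 w2], (Csum_lt g n) as [s1 s2]. unfold Cadd, C0 in E; simpl in E.
  injection E as E1 E2. unfold Cnorm; simpl. right. f_equal. nra.
Qed.

Lemma Csum_real_mul (f g : nat -> R) (n : nat) :
  Csum_lt (fun k => Cmul (f k, 0) (g k, 0)) n = (Rsum_lt (fun k => f k * g k) n, 0).
Proof.
  unfold Csum_lt, Rsum_lt. induction (seq 0 n) as [|j l IH]; simpl; [reflexivity|].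
  rewrite IH. unfold Cadd, Cmul; simpl. f_equal; ring.
Qed.

Lemma derivable_pt_lim_ext (f g : R -> R) (x l : R) :
  (forall t, f t = g t) -> derivable_pt_lim f x l -> derivable_pt_lim g x l.
Proof.
  intros E Hf eps Heps. destruct (Hf eps Heps) as [d Hd]. exists d.
  intros h Hh Hhd. rewrite <- !E. apply Hd; assumption.
Qed.

Lemma derivable_bounded (f f' : R -> R) (lo hi : R) : lo <= hi ->
  (forall t, lo <= t <= hi -> derivable_pt_lim f t (f' t)) ->
  exists M, forall t, lo <= t <= hi -> Rabs (f t) <= M.
Proof.
  intros Hle Hd. destruct (continuity_ab_maj (comp Rabs f) lo hi Hle) as [t0 [Ht0 _]].
  - intros c Hc. apply continuity_pt_comp; [|apply Rcontinuity_abs].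
    apply derivable_continuous_pt. exact (exist _ (f' c) (Hd c Hc)).
  - exists (Rabs (f t0)). exact Ht0.
Qed.

(* Proof: apply
   the mean value theorem to the projection of (u,v) on the unit vector
   realising |(u,v)(x)|, minus K t^(q+1)/(q+1). *)
Lemma norm_growth_bound (u v u' v' : R -> R) (x K : R) (q : nat) : 0 < x ->
  (forall t, 0 <= t <= x -> derivable_pt_lim u t (u' t)) ->
  (forall t, 0 <= t <= x -> derivable_pt_lim v t (v' t)) ->
  u 0 = 0 -> v 0 = 0 ->
  (forall c, 0 < c < x -> Cnorm (u' c, v' c) <= K * c ^ q) ->
  Cnorm (u x, v x) <= K * x ^ S q / INR (S q).
Proof.
  intros Hx Hu Hv u0 v0 Hspeed.
  destruct (Cnorm_attained (u x) (v x)) as [al [be [Hunit Hval]]].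
  assert (Hal : Cnorm (al, be) = 1) by (unfold Cnorm; simpl; rewrite Hunit; apply sqrt_1).
  assert (Hq : 0 < INR (S q)) by (apply lt_0_INR; lia).
  set (phi := fun t => al * u t + be * v t - K * t ^ S q / INR (S q)).
  assert (Hmon : forall t, derivable_pt_lim (fun t => K * t ^ S q / INR (S q)) t (K * t ^ q)).
  { intros t.
    apply (derivable_pt_lim_ext (fun t => K / INR (S q) * t ^ S q)); [intros; field; lra|].
    replace (K * t ^ q) with (K / INR (S q) * (INR (S q) * t ^ pred (S q))) by (cbn [pred]; field; lra).
    apply derivable_pt_lim_scal, derivable_pt_lim_pow. }
  destruct (MVT_cor2 phi (fun t => al * u' t + be * v' t - K * t ^ q) 0 x Hx)
    as [c [Hmvt Hc]].
  { intros c Hc. apply derivable_pt_lim_minus; [|apply Hmon].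
    apply derivable_pt_lim_plus; apply derivable_pt_lim_scal; auto. }
  assert (Hslope : al * u' c + be * v' c <= K * c ^ q).
  { pose proof (Cauchy_Schwarz al be (u' c) (v' c)). rewrite Hal in *.
    pose proof (Hspeed c Hc). lra. }
  unfold phi in Hmvt. rewrite u0, v0, pow_i in Hmvt by lia. nra.
Qed.

(** [inv_rising p j = 1 / ((p+1)(p+2)...(p+j))]: the constant produced by
    integrating [s^p] [j] times. *)
Fixpoint inv_rising (p j : nat) : R :=
  match j with
  | O => 1
  | S j' => inv_rising p j' / INR (S (p + j'))
  end.

Lemma inv_rising_pos (p j : nat) : 0 < inv_rising p j.
Proof.
  induction j as [|j IH]; cbn [inv_rising]; [lra|].
  apply Rdiv_lt_0_compat; [exact IH|apply lt_0_INR; lia].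
Qed.

(* (p+1) / ((p+1)...(p+j+1)) <= 1/j!, since p+i+1 >= i for every factor. *)
Lemma inv_rising_le_inv_fact (p j : nat) :
  inv_rising p (S j) * INR (S p) <= / INR (fact j).
Proof.
  induction j as [|j IH].
  - cbn [inv_rising fact]. rewrite Nat.add_0_r.
    assert (0 < INR (S p)) by (apply lt_0_INR; lia). right. simpl INR at 3. field. lra.
  - change (inv_rising p (S (S j))) with (inv_rising p (S j) / INR (S (p + S j))).
    change (fact (S j)) with (S j * fact j)%nat. rewrite mult_INR.
    assert (Hf : 0 < INR (fact j)) by apply lt_0_INR, lt_O_fact.
    assert (Hj : 0 < INR (S j)) by (apply lt_0_INR; lia).
    assert (Hjp : INR (S j) <= INR (S (p + S j))) by (apply le_INR; lia).
    pose proof (inv_rising_pos p (S j)). pose proof (pos_INR p).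
    rewrite Rinv_mult. unfold Rdiv.
    replace (inv_rising p (S j) * / INR (S (p + S j)) * INR (S p))
      with (inv_rising p (S j) * INR (S p) * / INR (S (p + S j))) by ring.
    rewrite Rmult_comm. apply Rmult_le_compat.
    + left. apply Rinv_0_lt_compat. lra.
    + apply Rmult_le_pos; [lra|apply pos_INR].
    + apply Rinv_le_contravar; lra.
    + exact IH.
Qed.

Lemma sum_inv_rising_le_Bn (p n : nat) :
  Rsum_lt (fun k => inv_rising p (n - k)) n * INR (S p) <= Bn n.
Proof.
  induction n as [|n IH]; [unfold Bn, Rsum_lt; simpl; lra|].
  rewrite Rsum_Sl, Bn_S, Nat.sub_0_r. cbn [Nat.sub].
  pose proof (inv_rising_le_inv_fact p n). lra.
Qed.

Lemma geometric_squeeze (a b th : R) : 0 <= th < 1 -> 0 <= a ->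
  (forall i, a <= th ^ i * b) -> a = 0.
Proof.
  intros Hth Ha Hi. destruct (Req_dec a 0) as [|Ha0]; [assumption|exfalso].
  assert (Hb : 0 < Rabs b + 1) by (pose proof (Rabs_pos b); lra).
  assert (Heps : 0 < a / (Rabs b + 1)) by (apply Rdiv_lt_0_compat; lra).
  destruct (pow_lt_1_zero th ltac:(rewrite Rabs_right; lra) _ Heps) as [N HN].
  specialize (HN N (le_n _)). specialize (Hi N).
  assert (th ^ N * b <= Rabs (th ^ N) * Rabs b) by (rewrite <- Rabs_mult; apply Rle_abs).
  assert (Rabs (th ^ N) * Rabs b <= a / (Rabs b + 1) * Rabs b)
    by (apply Rmult_le_compat_r; [apply Rabs_pos|lra]).
  assert (a / (Rabs b + 1) * Rabs b < a).
  { apply (Rmult_lt_reg_r (Rabs b + 1)); [lra|]. field_simplify; lra. }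
  lra.
Qed.

(** The abstract vanishing argument.  [G k s] stands for the size of the
    k-th derivative at distance [s] from the origin.  Starting from
    [G n = O(s^p)] and integrating [n-k] times gives [G k = O(s^(p+n-k))];
    feeding this back into the equation improves the constant by the factor
    [K * sum_j inv_rising p j <= K B_n / (p+1) < 1], so the constant is 0. *)
Section AbstractVanishing.
Variables (n p : nat) (x K : R) (G : nat -> R -> R).
Hypothesis x_pos : 0 < x.
Hypothesis G_nonneg : forall k s, 0 <= G k s.
Hypothesis G_growth : forall k, (k < n + p)%nat -> forall s, 0 < s <= x ->
  forall Kb q, (forall c, 0 < c < s -> G (S k) c <= Kb * c ^ q) ->
  G k s <= Kb * s ^ S q / INR (S q).
Hypothesis G_top_bounded : exists M, forall s, 0 < s <= x -> G (n + p)%nat s <= M.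
Hypothesis G_equation : forall s, 0 < s <= x ->
  G n s <= Rsum_lt (fun k => K / s ^ (n - k) * G k s) n.
Hypothesis K_nonneg : 0 <= K.
Hypothesis K_small : K * Bn n < INR (S p).

Lemma top_integrated (j : nat) : (j <= p)%nat ->
  exists S0, forall s, 0 < s <= x -> G (n + p - j)%nat s <= S0 * s ^ j.
Proof.
  induction j as [|j IH]; intros Hj.
  - destruct G_top_bounded as [M HM]. exists M. intros s Hs.
    rewrite Nat.sub_0_r. simpl. rewrite Rmult_1_r. auto.
  - destruct (IH ltac:(lia)) as [S0 HS0]. exists (S0 / INR (S j)). intros s Hs.
    replace (S0 / INR (S j) * s ^ S j) with (S0 * s ^ S j / INR (S j)) by (unfold Rdiv; ring).
    apply G_growth; [lia|exact Hs|]. intros c Hc.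
    replace (S (n + p - S j)) with (n + p - j)%nat by lia. apply HS0. lra.
Qed.

Lemma descent (S0 : R) : (forall s, 0 < s <= x -> G n s <= S0 * s ^ p) ->
  forall j, (j <= n)%nat ->
  forall s, 0 < s <= x -> G (n - j)%nat s <= S0 * inv_rising p j * s ^ (p + j).
Proof.
  intros H0 j. induction j as [|j IH]; intros Hj s Hs.
  - rewrite Nat.sub_0_r, Nat.add_0_r. simpl. rewrite Rmult_1_r. auto.
  - replace (S0 * inv_rising p (S j) * s ^ (p + S j))
      with (S0 * inv_rising p j * s ^ S (p + j) / INR (S (p + j)))
      by (rewrite Nat.add_succ_r; cbn [inv_rising]; unfold Rdiv; ring).
    apply G_growth; [lia|exact Hs|]. intros c Hc.
    replace (S (n - S j)) with (n - j)%nat by lia. apply IH; [lia|lra].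
Qed.

(* T = sum_{j=1}^{n} inv_rising p j, so that K * T < 1 by [K_small]. *)
Let T := Rsum_lt (fun k => inv_rising p (n - k)) n.

Lemma contraction (S0 : R) : (forall s, 0 < s <= x -> G n s <= S0 * s ^ p) ->
  forall s, 0 < s <= x -> G n s <= (K * T) * S0 * s ^ p.
Proof.
  intros H0 s Hs. eapply Rle_trans; [apply G_equation, Hs|].
  eapply Rle_trans; [apply (Rsum_le _ (fun k => (K * S0 * s ^ p) * inv_rising p (n - k)))|].
  - intros k Hk. pose proof (descent S0 H0 (n - k) ltac:(lia) s Hs) as D.
    replace (n - (n - k))%nat with k in D by lia.
    assert (0 < s ^ (n - k)) by (apply pow_lt; lra).
    replace (K * S0 * s ^ p * inv_rising p (n - k))
      with (K / s ^ (n - k) * (S0 * inv_rising p (n - k) * s ^ (p + (n - k))))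
      by (rewrite pow_add; field; lra).
    apply Rmult_le_compat_l; [|exact D].
    apply Rmult_le_pos; [lra|left; apply Rinv_0_lt_compat; lra].
  - rewrite Rsum_scal. unfold T. right; ring.
Qed.

(* The constant in G n <= S0 s^p can be taken (K T)^i S0 for every i. *)
Lemma abstract_vanishing : forall s, 0 < s <= x -> G 0%nat s = 0.
Proof.
  destruct (top_integrated p (le_n _)) as [S0 HS0].
  replace (n + p - p)%nat with n in HS0 by lia.
  assert (HS00 : 0 <= S0).
  { assert (Hxp : 0 < x ^ p) by (apply pow_lt; lra).
    apply (Rmult_le_reg_r (x ^ p) _ _ Hxp). rewrite Rmult_0_l.
    eapply Rle_trans; [apply G_nonneg|apply HS0; lra]. }
  assert (HT0 : 0 <= T).
  { rewrite <- (Rsum_zero n). apply Rsum_le. intros. left. apply inv_rising_pos. }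
  assert (HKT : K * T < 1).
  { pose proof (sum_inv_rising_le_Bn p n) as HB. fold T in HB.
    assert (0 < INR (S p)) by (apply lt_0_INR; lia).
    apply (Rmult_lt_reg_r (INR (S p))); nra. }
  assert (Hiter : forall i s, 0 < s <= x -> G n s <= (K * T) ^ i * S0 * s ^ p).
  { induction i as [|i IH]; intros s Hs; [simpl; rewrite Rmult_1_l; auto|].
    replace ((K * T) ^ S i * S0) with ((K * T) * ((K * T) ^ i * S0)) by (simpl; ring).
    apply contraction; assumption. }
  intros s Hs.
  apply (geometric_squeeze _ (S0 * inv_rising p n * s ^ (p + n)) (K * T));
    [split; [apply Rmult_le_pos|]; auto|apply G_nonneg|].
  intros i. pose proof (descent _ (Hiter i) n (le_n _) s Hs) as D.
  rewrite Nat.sub_diag in D. eapply Rle_trans; [exact D|right; ring].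
Qed.

End AbstractVanishing.

(** A complex-valued function [Du 0 + i Dv 0] given through its derivative
    families; [modC Du Dv k s] is the modulus of its k-th derivative at s. *)
Definition modC (Du Dv : nat -> R -> R) (k : nat) (s : R) : R := Cnorm (Du k s, Dv k s).

Lemma vanish_right (n p : nat) (a x K : R) (Du Dv : nat -> R -> R) :
  0 < x < a -> 0 <= K -> K * Bn n < INR (S p) ->
  derivs_on a Du -> derivs_on a Dv ->
  (forall k, (k < n + p)%nat -> Du k 0 = 0 /\ Dv k 0 = 0) ->
  (forall s, 0 < s <= x ->
     modC Du Dv n s <= Rsum_lt (fun k => K / s ^ (n - k) * modC Du Dv k s) n) ->
  forall s, 0 < s <= x -> Du 0%nat s = 0 /\ Dv 0%nat s = 0.
Proof.
  intros Hx HK HKB HDu HDv Hzero Heq s Hs.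
  apply Cnorm_eq0. apply (abstract_vanishing n p x K (modC Du Dv)); try tauto.
  - intros k t. apply Cnorm_nonneg.
  - intros k Hk t Ht Kb q Hb.
    apply (norm_growth_bound _ _ (Du (S k)) (Dv (S k))); try apply Hzero; try tauto.
    + intros r Hr. apply HDu. lra.
    + intros r Hr. apply HDv. lra.
  - destruct (derivable_bounded (Du (n + p)%nat) (Du (S (n + p))) 0 x) as [Mu HMu];
      [lra|intros t Ht; apply HDu; lra|].
    destruct (derivable_bounded (Dv (n + p)%nat) (Dv (S (n + p))) 0 x) as [Mv HMv];
      [lra|intros t Ht; apply HDv; lra|].
    exists (Mu + Mv). intros t Ht. eapply Rle_trans; [apply Cnorm_le_abs|].
    pose proof (HMu t ltac:(lra)). pose proof (HMv t ltac:(lra)). lra.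
Qed.

(** Reflection [s |-> -s] of a derivative family: the k-th derivative of
    [D 0 (-s)] is [(-1)^k D k (-s)].  It reduces the left side to the right. *)
Definition reflect_fam (D : nat -> R -> R) : nat -> R -> R :=
  fun k s => (-1) ^ k * D k (- s).

Lemma derivs_on_reflect (a : R) (D : nat -> R -> R) :
  derivs_on a D -> derivs_on a (reflect_fam D).
Proof.
  intros HD k t Ht. unfold reflect_fam.
  replace ((-1) ^ S k * D (S k) (- t)) with ((-1) ^ k * - D (S k) (- t)) by (simpl; ring).
  apply derivable_pt_lim_scal, derivable_pt_lim_mirr_fwd.
  rewrite Ropp_involutive. apply HD. lra.
Qed.

Lemma modC_reflect (Du Dv : nat -> R -> R) (k : nat) (s : R) :
  modC (reflect_fam Du) (reflect_fam Dv) k s = modC Du Dv k (- s).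
Proof.
  unfold modC, reflect_fam, Cnorm; simpl. f_equal.
  assert (Hsign : (-1) ^ k * (-1) ^ k = 1).
  { rewrite <- Rpow_mult_distr. replace (-1 * -1) with 1 by ring. apply pow1. }
  transitivity ((-1) ^ k * (-1) ^ k * (Du k (- s) * Du k (- s) + Dv k (- s) * Dv k (- s)));
    [ring|rewrite Hsign; ring].
Qed.

Lemma vanish_two_sided (n p : nat) (a R0 x K : R) (Du Dv : nat -> R -> R) :
  (1 <= n)%nat -> R0 <= a -> 0 < x < R0 -> 0 <= K -> K * Bn n < INR (S p) ->
  derivs_on a Du -> derivs_on a Dv ->
  (forall k, (k < n + p)%nat -> Du k 0 = 0 /\ Dv k 0 = 0) ->
  (forall y, y <> 0 -> Rabs y < R0 ->
     modC Du Dv n y <= Rsum_lt (fun k => K / Rabs y ^ (n - k) * modC Du Dv k y) n) ->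
  forall y, -x <= y <= x -> Du 0%nat y = 0 /\ Dv 0%nat y = 0.
Proof.
  intros Hn HR0 Hx HK HKB HDu HDv Hzero Heq y Hy.
  destruct (Rtotal_order y 0) as [Hneg|[->|Hpos]].
  - assert (Hzero' : forall k, (k < n + p)%nat ->
              reflect_fam Du k 0 = 0 /\ reflect_fam Dv k 0 = 0).
    { intros k Hk. unfold reflect_fam. rewrite Ropp_0.
      destruct (Hzero k Hk) as [-> ->]. split; ring. }
    assert (Heq' : forall s, 0 < s <= x ->
              modC (reflect_fam Du) (reflect_fam Dv) n s <=
              Rsum_lt (fun k => K / s ^ (n - k) * modC (reflect_fam Du) (reflect_fam Dv) k s) n).
    { intros s Hs. rewrite modC_reflect.
      rewrite (Rsum_ext _ (fun k => K / Rabs (- s) ^ (n - k) * modC Du Dv k (- s)))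
        by (intros k _; rewrite modC_reflect, Rabs_Ropp, Rabs_right by lra; reflexivity).
      apply Heq; [lra|rewrite Rabs_Ropp, Rabs_right; lra]. }
    destruct (vanish_right n p a x K (reflect_fam Du) (reflect_fam Dv) ltac:(lra) HK HKB
      (derivs_on_reflect a Du HDu) (derivs_on_reflect a Dv HDv) Hzero' Heq' (- y)
      ltac:(lra)) as [Hu Hv].
    unfold reflect_fam in Hu, Hv. rewrite Ropp_involutive in Hu, Hv. simpl in Hu, Hv.
    lra.
  - apply Hzero. lia.
  - apply (vanish_right n p a x K); try tauto; [lra|].
    intros s Hs.
    rewrite (Rsum_ext _ (fun k => K / Rabs s ^ (n - k) * modC Du Dv k s))
      by (intros k _; rewrite Rabs_right by lra; reflexivity).
    apply Heq; [lra|rewrite Rabs_right; lra].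
Qed.

Lemma choose_vanishing_order (n : nat) (c : R) : 0 <= c ->
  exists p : nat, c < INR (S p) /\
    forall k, (k < n + p)%nat -> INR k <= c + INR n - 1.
Proof.
  intros Hc. destruct (archimed c) as [Hup1 Hup2].
  assert (Hz : (0 < up c)%Z) by (apply lt_IZR; lra).
  exists (Z.to_nat (up c - 1)).
  assert (Hp : INR (S (Z.to_nat (up c - 1))) = IZR (up c)).
  { rewrite S_INR, INR_IZR_INZ, Z2Nat.id by lia. rewrite minus_IZR. simpl. ring. }
  split; [lra|]. intros k Hk.
  assert (INR (S k) <= INR (n + Z.to_nat (up c - 1))) by (apply le_INR; lia).
  rewrite S_INR, plus_INR in *. lra.
Qed.

Lemma eventually_forall_lt (P : nat -> R -> Prop) (N : nat) :
  (forall k d d', 0 < d' <= d -> P k d -> P k d') ->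
  (forall k, (k < N)%nat -> exists d, 0 < d /\ P k d) ->
  exists d, 0 < d /\ forall k, (k < N)%nat -> P k d.
Proof.
  intros Hmono. induction N as [|N IH]; intros H.
  - exists 1. split; [lra|]. intros; lia.
  - destruct IH as [d1 [Hd1 H1]]; [intros; apply H; lia|].
    destruct (H N ltac:(lia)) as [d2 [Hd2 H2]].
    assert (Hmin : 0 < Rmin d1 d2) by (apply Rmin_glb_lt; assumption).
    exists (Rmin d1 d2). split; [exact Hmin|]. intros k Hk.
    destruct (Nat.eq_dec k N) as [->|HkN].
    + apply (Hmono N d2); [split; [exact Hmin|apply Rmin_r]|exact H2].
    + apply (Hmono k d1); [split; [exact Hmin|apply Rmin_l]|apply H1; lia].
Qed.

Lemma equation_estimate (n : nat) (a eps : R) (A : nat -> R -> CC -> CC)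
    (Du Dv : nat -> R -> R) (L : nat -> R) :
  0 < a -> 0 < eps ->
  (forall x, -a < x < a -> x <> 0 ->
     Cadd (Du n x, Dv n x)
          (Csum_lt (fun k => Cmul (A k x (Du 0%nat x, Dv 0%nat x)) (Du k x, Dv k x)) n)
     = C0) ->
  (forall k, (k < n)%nat ->
     is_limsup0 (fun x => Rabs x ^ (n - k) * Cnorm (A k x (Du 0%nat x, Dv 0%nat x))) (L k)) ->
  exists R0, 0 < R0 <= a /\ forall y, y <> 0 -> Rabs y < R0 ->
    modC Du Dv n y <=
    Rsum_lt (fun k => (maxlist L n + eps) / Rabs y ^ (n - k) * modC Du Dv k y) n.
Proof.
  intros Ha Heps Hode Hls.
  destruct (eventually_forall_lt (fun k d => forall y, y <> 0 -> Rabs y < d ->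
      Rabs y ^ (n - k) * Cnorm (A k y (Du 0%nat y, Dv 0%nat y)) <= L k + eps) n)
    as [d [Hd Hcoef]].
  { intros k d d' Hd' H y Hy Hyd. apply H; [exact Hy|lra]. }
  { intros k Hk. apply (proj1 (Hls k Hk) eps Heps). }
  exists (Rmin d a). split; [split; [apply Rmin_glb_lt; assumption|apply Rmin_r]|].
  intros y Hy Hyd.
  assert (Hya : -a < y < a)
    by (pose proof (Rmin_r d a); destruct (Rabs_def2 y a) as [H1 H2]; [lra|split; lra]).
  eapply Rle_trans; [apply (Cnorm_solve _ _ _ (Hode y Hya Hy))|].
  apply Rsum_le. intros k Hk. rewrite Cnorm_mul. fold (modC Du Dv k y).
  apply Rmult_le_compat_r; [apply Cnorm_nonneg|].
  assert (Hpy : 0 < Rabs y ^ (n - k)) by (apply pow_lt, Rabs_pos_lt; exact Hy).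
  apply (Rmult_le_reg_l (Rabs y ^ (n - k))); [exact Hpy|].
  replace (Rabs y ^ (n - k) * ((maxlist L n + eps) / Rabs y ^ (n - k)))
    with (maxlist L n + eps) by (field; lra).
  pose proof (maxlist_ge L n k Hk).
  pose proof (Hcoef k Hk y Hy ltac:(pose proof (Rmin_l d a); lra)). lra.
Qed.

(* The theorem for K = C. *)
Theorem complex_case (n : nat) (a : R) (A : nat -> R -> CC -> CC)
    (Du Dv : nat -> R -> R) (L : nat -> R) :
  (2 <= n)%nat -> 0 < a -> derivs_on a Du -> derivs_on a Dv ->
  (forall x, -a < x < a -> x <> 0 ->
     Cadd (Du n x, Dv n x)
          (Csum_lt (fun k => Cmul (A k x (Du 0%nat x, Dv 0%nat x)) (Du k x, Dv k x)) n)
     = C0) ->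
  (forall k, (k < n)%nat ->
     is_limsup0 (fun x => Rabs x ^ (n - k) * Cnorm (A k x (Du 0%nat x, Dv 0%nat x))) (L k)) ->
  (forall k : nat, INR k <= Bn n * maxlist L n + INR n - 1 -> Du k 0 = 0 /\ Dv k 0 = 0) ->
  exists delta, 0 < delta < a /\
    forall x, -delta <= x <= delta -> Du 0%nat x = 0 /\ Dv 0%nat x = 0.
Proof.
  intros Hn Ha HDu HDv Hode Hls Hzero.
  set (Lm := maxlist L n). set (B := Bn n).
  assert (HB : 1 <= B) by (apply Bn_ge1; lia).
  assert (HLm : 0 <= Lm) by apply maxlist_nonneg.
  destruct (choose_vanishing_order n (B * Lm) ltac:(nra)) as [p [Hp Horder]].
  (* a constant K = Lm + eps still satisfying K * B < p + 1 *)
  set (eps := (INR (S p) - B * Lm) / (2 * B)).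
  assert (Heps : 0 < eps) by (apply Rdiv_lt_0_compat; lra).
  assert (HKB : (Lm + eps) * B < INR (S p)).
  { replace ((Lm + eps) * B) with (B * Lm + (INR (S p) - B * Lm) / 2)
      by (unfold eps; field; lra). lra. }
  destruct (equation_estimate n a eps A Du Dv L Ha Heps Hode Hls) as [R0 [HR0 Hest]].
  exists (R0 / 2). split; [lra|].
  apply (vanish_two_sided n p a R0 (R0 / 2) (Lm + eps) Du Dv); try assumption; try lra; try lia.
  intros k Hk. apply Hzero, Horder, Hk.
Qed.

Lemma is_limsup0_ext (f g : R -> R) (l : R) :
  (forall x, f x = g x) -> is_limsup0 f l -> is_limsup0 g l.
Proof.
  intros E [Hup Hfreq]. split.
  - intros e He. destruct (Hup e He) as [d [Hd H]]. exists d. split; [exact Hd|].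
    intros. rewrite <- E. auto.
  - intros e d He Hd. destruct (Hfreq e d He Hd) as [y Hy]. exists y. rewrite <- E. exact Hy.
Qed.

(* The theorem for K = R, as the special case Dv = 0 of the complex one. *)
Theorem real_case (n : nat) (a : R) (A : nat -> R -> R -> R) (D : nat -> R -> R)
    (L : nat -> R) :
  (2 <= n)%nat -> 0 < a -> derivs_on a D ->
  (forall x, -a < x < a -> x <> 0 ->
     D n x + Rsum_lt (fun k => A k x (D 0%nat x) * D k x) n = 0) ->
  (forall k, (k < n)%nat ->
     is_limsup0 (fun x => Rabs x ^ (n - k) * Rabs (A k x (D 0%nat x))) (L k)) ->
  (forall k : nat, INR k <= Bn n * maxlist L n + INR n - 1 -> D k 0 = 0) ->
  exists delta, 0 < delta < a /\ forall x, -delta <= x <= delta -> D 0%nat x = 0.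
Proof.
  intros Hn Ha HD Hode Hls Hzero.
  destruct (complex_case n a (fun k x z => (A k x (fst z), 0)) D (fun _ _ => 0) L Hn Ha HD)
    as [delta [Hdelta Hvanish]].
  - intros k x _. apply derivable_pt_lim_const.
  - intros x Hx Hx0. simpl. rewrite Csum_real_mul. unfold Cadd, C0; simpl.
    rewrite (Hode x Hx Hx0). f_equal. ring.
  - intros k Hk. eapply is_limsup0_ext; [|exact (Hls k Hk)].
    intros x. simpl. rewrite Cnorm_real. reflexivity.
  - intros k Hk. split; [apply Hzero, Hk|reflexivity].
  - exists delta. split; [exact Hdelta|]. intros x Hx. apply (Hvanish x Hx).
Qed.

Theorem proposition9 :
  (* Case K = R *)
  (forall (n : nat) (a : R) (A : nat -> R -> R -> R) (D : nat -> R -> R)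
          (L : nat -> R),
     (2 <= n)%nat -> 0 < a ->
     derivs_on a D ->
     (forall x, -a < x < a -> x <> 0 ->
        D n x + Rsum_lt (fun k => A k x (D 0%nat x) * D k x) n = 0) ->
     (forall k, (k < n)%nat -> exists M d, 0 < d /\
        forall x, x <> 0 -> Rabs x < d ->
          Rabs (A k x (D 0%nat x)) <= M / (Rabs x) ^ (n - k)) ->
     (forall k, (k < n)%nat ->
        is_limsup0 (fun x => Rabs x ^ (n - k) * Rabs (A k x (D 0%nat x))) (L k)) ->
     (forall k : nat, INR k <= Bn n * maxlist L n + INR n - 1 -> D k 0 = 0) ->
     exists delta, 0 < delta < a /\
       forall x, -delta <= x <= delta -> D 0%nat x = 0)
  /\
  (* Case K = C: f = Du 0 + i Dv 0 *)
  (forall (n : nat) (a : R) (A : nat -> R -> CC -> CC)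
          (Du Dv : nat -> R -> R) (L : nat -> R),
     (2 <= n)%nat -> 0 < a ->
     derivs_on a Du -> derivs_on a Dv ->
     (forall x, -a < x < a -> x <> 0 ->
        Cadd (Du n x, Dv n x)
             (Csum_lt (fun k => Cmul (A k x (Du 0%nat x, Dv 0%nat x)) (Du k x, Dv k x)) n)
        = C0) ->
     (forall k, (k < n)%nat -> exists M d, 0 < d /\
        forall x, x <> 0 -> Rabs x < d ->
          Cnorm (A k x (Du 0%nat x, Dv 0%nat x)) <= M / (Rabs x) ^ (n - k)) ->
     (forall k, (k < n)%nat ->
        is_limsup0 (fun x => Rabs x ^ (n - k) * Cnorm (A k x (Du 0%nat x, Dv 0%nat x))) (L k)) ->
     (forall k : nat, INR k <= Bn n * maxlist L n + INR n - 1 ->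
        Du k 0 = 0 /\ Dv k 0 = 0) ->
     exists delta, 0 < delta < a /\
       forall x, -delta <= x <= delta -> Du 0%nat x = 0 /\ Dv 0%nat x = 0).
Proof.
  split.
  - intros n a A D L Hn Ha HD Hode _ Hls Hzero. exact (real_case n a A D L Hn Ha HD Hode Hls Hzero).
  - intros n a A Du Dv L Hn Ha HDu HDv Hode _ Hls Hzero.
    exact (complex_case n a A Du Dv L Hn Ha HDu HDv Hode Hls Hzero).
Qed.
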